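(* Let $F:\mathsf V\to\mathsf W$ be a morphism of quantales and $X=(X,a)$ a $\mathsf V$-category; let $FX=(X,F\circ a)$. Let $\Phi$ be the map from the set of left adjoint $\mathsf V$-modules $E\rightharpoonup X$ to the set of left adjoint $\mathsf W$-modules $E\rightharpoonup FX$ given by $\Phi(\varphi)=F\circ\varphi$. (1) If $FX$ is Cauchy complete and $\Phi$ is injective, then $X$ is Cauchy complete. (2) If $X$ is Cauchy complete and $\Phi$ is surjective, then $FX$ is Cauchy complete.
   Context: A quantale $(\mathsf V,\otimes,k)$ is a complete anti-symmetric lattice with an associative, commutative operation $\otimes$ with neutral element $k$ distributing over arbitrary suprema. A morphism of quantales $F:(\mathsf V,\otimes,k)\to(\mathsf W,\oplus,l)$ is a monotone map preserving all suprema, with $F(u)\oplus F(v)=F(u\otimes v)$ and $F(k)=l$. A $\mathsf V$-category $(X,a)$ is a set with $a:X\times X\to\mathsf V$ such that $k\le a(x,x)$ and $a(x,y)\otimes a(y,z)\le a(x,z)$. A $\mathsf V$-module $\varphi:(X,a)\rightharpoonup(Y,b)$ is a map $X\times Y\to\mathsf V$ with $a(x,x')\otimes\varphi(x',y)\le\varphi(x,y)$ and $\varphi(x,y)\otimes b(y,y')\le\varphi(x,y')$; composition $(\psi\cdot\varphi)(x,z)=\bigvee_y\varphi(x,y)\otimes\psi(y,z)$; pointwise order; $\varphi\dashv\psi$ means $a\le\psi\cdot\varphi$ and $\varphi\cdot\psi\le b$; $\varphi$ is left adjoint if such $\psi$ exists. $E=(\{\star\},k)$ (for $\mathsf W$,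 $(\{\star\},l)$, which equals $FE$). For $x\in X$, $x_*:E\rightharpoonup X$ is $y\mapsto a(x,y)$. $X$ is Cauchy complete if every left adjoint module $E\rightharpoonup X$ equals $x_*$ for some $x\in X$. $F$ applied to a module is post-composition with $F$; it preserves adjunctions. *)

Record quantale := Quantale {
  qcar :> Type;
  qle : qcar -> qcar -> Prop;
  qsup : (qcar -> Prop) -> qcar;
  qten : qcar -> qcar -> qcar;
  qk : qcar;
  qle_refl : forall u, qle u u;
  qle_trans : forall u v w, qle u v -> qle v w -> qle u w;
  qle_antisym : forall u v, qle u v -> qle v u -> u = v;
  qsup_ub : forall (S : qcar -> Prop) u, S u -> qle u (qsup S);
  qsup_least : forall (S : qcar -> Prop) w, (forall u, S u -> qle u w) -> qle (qsup S) w;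
  qten_assoc : forall u v w, qten u (qten v w) = qten (qten u v) w;
  qten_comm : forall u v, qten u v = qten v u;
  qten_k : forall u, qten qk u = u;
  qten_sup : forall u (S : qcar -> Prop),
      qten u (qsup S) = qsup (fun w => exists v, S v /\ w = qten u v)
}.

Arguments qle {q}.
Arguments qsup {q}.
Arguments qten {q}.
Arguments qk {q}.

Definition qmorph (V W : quantale) (F : V -> W) : Prop :=
  (forall u v, qle u v -> qle (F u) (F v)) /\
  (forall S : V -> Prop, F (qsup S) = qsup (fun w => exists v, S v /\ w = F v)) /\
  (forall u v, qten (F u) (F v) = F (qten u v)) /\
  F qk = qk.

Definition vcat (V : quantale) (X : Type) (a : X -> X -> V) : Prop :=
  (forall x, qle qk (a x x)) /\
  (forall x y z, qle (qten (a x y) (a y z)) (a x z)).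

Definition vmodule (V : quantale) (X Y : Type) (a : X -> X -> V) (b : Y -> Y -> V)
  (phi : X -> Y -> V) : Prop :=
  (forall x x' y, qle (qten (a x x') (phi x' y)) (phi x y)) /\
  (forall x y y', qle (qten (phi x y) (b y y')) (phi x y')).

Definition mcomp (V : quantale) (X Y Z : Type) (psi : Y -> Z -> V) (phi : X -> Y -> V)
  : X -> Z -> V :=
  fun x z => qsup (fun w => exists y, w = qten (phi x y) (psi y z)).

Arguments mcomp {V X Y Z}.

Definition madjoint (V : quantale) (X Y : Type) (a : X -> X -> V) (b : Y -> Y -> V)
  (phi : X -> Y -> V) (psi : Y -> X -> V) : Prop :=
  (forall x x', qle (a x x') (mcomp psi phi x x')) /\
  (forall y y', qle (mcomp phi psi y y') (b y y')).

Arguments madjoint {V X Y}.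
Arguments vmodule {V X Y}.

Definition left_adjoint (V : quantale) (X Y : Type) (a : X -> X -> V) (b : Y -> Y -> V)
  (phi : X -> Y -> V) : Prop :=
  vmodule a b phi /\ exists psi, vmodule b a psi /\ madjoint a b phi psi.

Arguments left_adjoint {V X Y}.
Arguments vcat {V X}.
Arguments qmorph {V W}.

Definition eE (V : quantale) : unit -> unit -> V := fun _ _ => qk.

Definition lowstar (V : quantale) (X : Type) (a : X -> X -> V) (x : X) : unit -> X -> V :=
  fun _ y => a x y.

Arguments lowstar {V X}.

Definition cauchy_complete (V : quantale) (X : Type) (a : X -> X -> V) : Prop :=
  forall phi : unit -> X -> V, left_adjoint (eE V) a phi -> exists x, phi = lowstar a x.

Arguments cauchy_complete {V X}.

Definition Phi (V W : quantale) (F : V -> W) (X : Type) (phi : unit -> X -> V)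
  : unit -> X -> W := fun u y => F (phi u y).

Arguments Phi {V W} F {X}.

Definition Phi_injective (V W : quantale) (F : V -> W) (X : Type) (a : X -> X -> V) : Prop :=
  forall phi1 phi2 : unit -> X -> V,
    left_adjoint (eE V) a phi1 -> left_adjoint (eE V) a phi2 ->
    Phi F phi1 = Phi F phi2 -> phi1 = phi2.

Definition Phi_surjective (V W : quantale) (F : V -> W) (X : Type) (a : X -> X -> V) : Prop :=
  forall psi : unit -> X -> W,
    left_adjoint (eE W) (fun x y => F (a x y)) psi ->
    exists phi, left_adjoint (eE V) a phi /\ Phi F phi = psi.

Arguments Phi_injective {V W} F {X}.
Arguments Phi_surjective {V W} F {X}.

(* Since F maps x_* for X to x_* for FX, injectivity of Phi pulls representability
   back from FX to X, and surjectivity pushes it forward from X to FX. *)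


Lemma qsup_ext (V : quantale) (S T : V -> Prop) :
  (forall w, S w <-> T w) -> qsup S = qsup T.
Proof.
  intros HST. apply qle_antisym; apply qsup_least; intros u Hu;
    apply qsup_ub; apply HST; exact Hu.
Qed.

(* Monotonicity comes from distributivity over the join of {u, v}, which is v. *)
Lemma qten_monor (V : quantale) (w u v : V) : qle u v -> qle (qten w u) (qten w v).
Proof.
  intros Huv.
  assert (Hv : v = qsup (fun z => z = u \/ z = v)).
  { apply qle_antisym.
    - apply qsup_ub. now right.
    - apply qsup_least. intros z [-> | ->]; [exact Huv | apply qle_refl]. }
  rewrite Hv, qten_sup. apply qsup_ub. exists u. split; [now left | reflexivity].
Qed.

Lemma qten_mono (V : quantale) (u u' v v' : V) :
  qle u u' -> qle v v' -> qle (qten u v) (qten u' v').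
Proof.
  intros Hu Hv. apply qle_trans with (qten u v').
  - now apply qten_monor.
  - rewrite (qten_comm _ u), (qten_comm _ u'). now apply qten_monor.
Qed.

Lemma lowstar_left_adjoint (V : quantale) (X : Type) (a : X -> X -> V) :
  vcat a -> forall x, left_adjoint (eE V) a (lowstar a x).
Proof.
  intros [a_refl a_trans] x. unfold eE, lowstar. split.
  - split; intros.
    + rewrite qten_k. apply qle_refl.
    + apply a_trans.
  - exists (fun y _ => a y x). split; split; intros.
    + apply a_trans.
    + rewrite qten_comm, qten_k. apply qle_refl.
    + unfold mcomp. apply qle_trans with (qten (a x x) (a x x)).
      * rewrite <- (qten_k V qk). now apply qten_mono.
      * apply qsup_ub. now exists x.
    + unfold mcomp. apply qsup_least. intros u [[] ->]. apply a_trans.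
Qed.

Section QuantaleMorphism.

Variables (V W : quantale) (F : V -> W).
Hypothesis hF : qmorph F.

Lemma qmorph_mcomp (X Y Z : Type) (psi : Y -> Z -> V) (phi : X -> Y -> V) x z :
  F (mcomp psi phi x z) = mcomp (fun y z => F (psi y z)) (fun x y => F (phi x y)) x z.
Proof.
  destruct hF as [_ [F_sup [F_ten _]]]. unfold mcomp. rewrite F_sup.
  apply qsup_ext. intros w; split.
  - intros [v [[y ->] ->]]. exists y. now rewrite F_ten.
  - intros [y ->]. exists (qten (phi x y) (psi y z)). split.
    + now exists y.
    + now rewrite F_ten.
Qed.

Lemma qmorph_vmodule (X Y : Type) (a : X -> X -> V) (b : Y -> Y -> V)
  (phi : X -> Y -> V) :
  vmodule a b phi ->
  vmodule (fun x x' => F (a x x')) (fun y y' => F (b y y')) (fun x y => F (phi x y)).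
Proof.
  destruct hF as [F_mono [_ [F_ten _]]]. intros [phi_l phi_r].
  split; intros; rewrite F_ten; apply F_mono; auto.
Qed.

Lemma qmorph_madjoint (X Y : Type) (a : X -> X -> V) (b : Y -> Y -> V)
  (phi : X -> Y -> V) (psi : Y -> X -> V) :
  madjoint a b phi psi ->
  madjoint (fun x x' => F (a x x')) (fun y y' => F (b y y'))
    (fun x y => F (phi x y)) (fun y x => F (psi y x)).
Proof.
  destruct hF as [F_mono _]. intros [unit counit].
  split; intros; rewrite <- qmorph_mcomp; apply F_mono; auto.
Qed.

Lemma qmorph_left_adjoint (X Y : Type) (a : X -> X -> V) (b : Y -> Y -> V)
  (phi : X -> Y -> V) :
  left_adjoint a b phi ->
  left_adjoint (fun x x' => F (a x x')) (fun y y' => F (b y y')) (fun x y => F (phi x y)).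
Proof.
  intros [phi_mod [psi [psi_mod adj]]]. split.
  - now apply qmorph_vmodule.
  - exists (fun y x => F (psi y x)). split.
    + now apply qmorph_vmodule.
    + now apply qmorph_madjoint.
Qed.

Lemma Phi_left_adjoint (X : Type) (a : X -> X -> V) (phi : unit -> X -> V) :
  left_adjoint (eE V) a phi -> left_adjoint (eE W) (fun x y => F (a x y)) (Phi F phi).
Proof.
  intros Hphi.
  replace (eE W) with (fun u v : unit => F (eE V u v)).
  - exact (qmorph_left_adjoint _ _ _ _ _ Hphi).
  - destruct hF as [_ [_ [_ F_k]]]. unfold eE. now rewrite F_k.
Qed.

Lemma cauchy_complete_of_Phi_injective (X : Type) (a : X -> X -> V) :
  vcat a -> cauchy_complete (fun x y => F (a x y)) -> Phi_injective F a ->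
  cauchy_complete a.
Proof.
  intros ha HC Hinj phi Hphi.
  destruct (HC _ (Phi_left_adjoint _ _ _ Hphi)) as [x Hx].
  exists x. apply Hinj; auto using lowstar_left_adjoint.
Qed.

Lemma cauchy_complete_of_Phi_surjective (X : Type) (a : X -> X -> V) :
  cauchy_complete a -> Phi_surjective F a -> cauchy_complete (fun x y => F (a x y)).
Proof.
  intros HC Hsurj psi Hpsi.
  destruct (Hsurj psi Hpsi) as [phi [Hphi <-]].
  destruct (HC phi Hphi) as [x ->]. now exists x.
Qed.

End QuantaleMorphism.

Theorem proposition3p2 (V W : quantale) (F : V -> W) (hF : qmorph F)
  (X : Type) (a : X -> X -> V) (ha : vcat a) :
  (cauchy_complete (fun x y => F (a x y)) -> Phi_injective F a -> cauchy_complete a) /\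
  (cauchy_complete a -> Phi_surjective F a -> cauchy_complete (fun x y => F (a x y))).
Proof.
  split.
  - now apply cauchy_complete_of_Phi_injective.
  - now apply cauchy_complete_of_Phi_surjective.
Qed.
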